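(* Let $c>0$ and $\lambda>0$ be constants, let $U\subset(0,T)\times\mathbb{R}^2$ be open, and for each $\varepsilon>0$ let $(\rho^\varepsilon,\Omega^\varepsilon)$, with $\rho^\varepsilon:U\to(0,\infty)$ and $\Omega^\varepsilon:U\to\mathbb{R}^2$, be a $C^1$ solution of the relaxation system $$\partial_t\rho^\varepsilon+\nabla_x\cdot(\rho^\varepsilon\Omega^\varepsilon)=0,\qquad \partial_t(\rho^\varepsilon\Omega^\varepsilon)+c\,\nabla_x\cdot(\rho^\varepsilon\Omega^\varepsilon\otimes\Omega^\varepsilon)+\lambda\nabla_x\rho^\varepsilon=\frac{\rho^\varepsilon}{\varepsilon}\,(1-|\Omega^\varepsilon|^2)\,\Omega^\varepsilon .$$ Suppose that, as $\varepsilon\to0$, $\rho^\varepsilon\to\rho^0$ and $\Omega^\varepsilon\to\Omega^0$ in $C^1_{loc}(U)$ (i.e. the functions and their first derivatives converge locally uniformly), where $\rho^0>0$ on $U$ and $\Omega^0$ vanishes nowhere on $U$. Then $|\Omega^0|=1$ on $U$ and $(\rho^0,\Omega^0)$ solves the macroscopic Vicsek system $$\partial_t\rho^0+\nabla_x\cdot(\rho^0\Omega^0)=0,\qquad \rho^0\big(\partial_t\Omega^0+c\,(\Omega^0\cdot\nabla_x)\Omega^0\big)+\lambda\,(\mathrm{Id}-\Omega^0\otimes\Omega^0)\nabla_x\rho^0=0 .$$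
   Context: $\mathrm{Id}$ is the $2\times2$ identity matrix, $a\otimes b$ the tensor product of vectors, and $\nabla_x\cdot(\rho\Omega\otimes\Omega)$ is the vector with components $\sum_j\partial_{x_j}(\rho\Omega_i\Omega_j)$. *)

From Stdlib Require Import Reals Lra ClassicalEpsilon.
Open Scope R_scope.

(* Scalar functions of (t, x1, x2). *)
Definition F3 := R -> R -> R -> R.

Definition dt (f : F3) (t x y : R) : R :=
  epsilon (inhabits 0) (fun l => derivable_pt_lim (fun s => f s x y) t l).
Definition dx (f : F3) (t x y : R) : R :=
  epsilon (inhabits 0) (fun l => derivable_pt_lim (fun s => f t s y) x l).
Definition dy (f : F3) (t x y : R) : R :=
  epsilon (inhabits 0) (fun l => derivable_pt_lim (fun s => f t x s) y l).

Definition in_ball (r t x y t' x' y' : R) : Prop :=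
  Rabs (t' - t) < r /\ Rabs (x' - x) < r /\ Rabs (y' - y) < r.

Definition open3 (U : R -> R -> R -> Prop) : Prop :=
  forall t x y, U t x y -> exists r, 0 < r /\
    forall t' x' y', in_ball r t x y t' x' y' -> U t' x' y'.

Definition cont_on (U : R -> R -> R -> Prop) (f : F3) : Prop :=
  forall t x y, U t x y -> forall e, 0 < e -> exists d, 0 < d /\
    forall t' x' y', U t' x' y' -> in_ball d t x y t' x' y' ->
      Rabs (f t' x' y' - f t x y) < e.

Definition C1_on (U : R -> R -> R -> Prop) (f : F3) : Prop :=
  (forall t x y, U t x y ->
     (exists l, derivable_pt_lim (fun s => f s x y) t l) /\
     (exists l, derivable_pt_lim (fun s => f t s y) x l) /\
     (exists l, derivable_pt_lim (fun s => f t x s) y l)) /\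
  cont_on U f /\ cont_on U (dt f) /\ cont_on U (dx f) /\ cont_on U (dy f).

Definition loc_unif_cv (U : R -> R -> R -> Prop) (fe : R -> F3) (f0 : F3) : Prop :=
  forall t x y, U t x y -> exists r, 0 < r /\
    (forall t' x' y', in_ball r t x y t' x' y' -> U t' x' y') /\
    forall e, 0 < e -> exists e0, 0 < e0 /\
      forall eps, 0 < eps < e0 -> forall t' x' y', in_ball r t x y t' x' y' ->
        Rabs (fe eps t' x' y' - f0 t' x' y') < e.

Definition C1loc_cv (U : R -> R -> R -> Prop) (fe : R -> F3) (f0 : F3) : Prop :=
  C1_on U f0 /\
  loc_unif_cv U fe f0 /\
  loc_unif_cv U (fun eps => dt (fe eps)) (dt f0) /\
  loc_unif_cv U (fun eps => dx (fe eps)) (dx f0) /\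
  loc_unif_cv U (fun eps => dy (fe eps)) (dy f0).

From Stdlib Require Import Reals Lra ClassicalEpsilon.
Open Scope R_scope.

(* Everything is pointwise.  At a point of U, the product rule rewrites the
   mass equation and the two momentum equations as polynomials in the values
   and first partial derivatives of (rho, Omega1, Omega2); since these converge
   as eps -> 0+, so do the polynomials.
   - The mass residual is 0 for every eps, hence 0 in the limit.
   - Multiplying the momentum equations by eps, the left-hand sides tend to 0,
     so the source rho0 (1 - |Omega0|^2) Omega0 vanishes; with rho0 > 0 and
     Omega0 <> 0 this gives |Omega0| = 1 on U.
   - Both momentum sources are parallel to Omega, so the cross combination
     M1 Omega2 - M2 Omega1 of the momentum left-hand sides is 0 for every eps,
     hence 0 in the limit; the (c - 1)-terms coming from the mass flux cancel
     in this combination.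
   - As |Omega0| = 1 on the open set U, Omega0 is orthogonal to its partial
     derivatives, so Omega0 . D Omega0 = 0 for the material derivative D.
   The two Vicsek equations are then an algebraic consequence of the cross
   relation, |Omega0| = 1 and Omega0 . D Omega0 = 0. *)

Definition deriv_value (g : R -> R) (x : R) : R :=
  epsilon (inhabits 0) (fun l => derivable_pt_lim g x l).

Definition has_deriv (g : R -> R) (x : R) : Prop := exists l, derivable_pt_lim g x l.

Lemma deriv_value_eq (g : R -> R) (x l : R) :
  derivable_pt_lim g x l -> deriv_value g x = l.
Proof.
  intro Hl. unfold deriv_value.
  apply (uniqueness_limite g x); [|exact Hl].
  exact (epsilon_spec (inhabits 0) (fun l => derivable_pt_lim g x l) (ex_intro _ l Hl)).
Qed.

Lemma deriv_value_spec (g : R -> R) (x : R) :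
  has_deriv g x -> derivable_pt_lim g x (deriv_value g x).
Proof. intros [l Hl]. rewrite (deriv_value_eq g x l Hl). exact Hl. Qed.

Lemma deriv_value_mult (g h : R -> R) (x : R) :
  has_deriv g x -> has_deriv h x ->
  has_deriv (fun s => g s * h s) x /\
  deriv_value (fun s => g s * h s) x = deriv_value g x * h x + g x * deriv_value h x.
Proof.
  intros Hg Hh.
  pose proof (derivable_pt_lim_mult g h x _ _ (deriv_value_spec g x Hg)
                (deriv_value_spec h x Hh)) as Hgh.
  split; [exists (deriv_value g x * h x + g x * deriv_value h x); exact Hgh|].
  exact (deriv_value_eq _ _ _ Hgh).
Qed.

Lemma locally_constant_deriv (g : R -> R) (x r C l : R) :
  0 < r -> (forall z, x - r < z < x + r -> g z = C) ->
  derivable_pt_lim g x l -> l = 0.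
Proof.
  intros Hr Hconst Hl.
  apply (uniqueness_limite (fun _ => C) x); [|apply derivable_pt_lim_const].
  apply (derivable_pt_lim_locally_ext g _ x (x - r) (x + r)); [lra|exact Hconst|exact Hl].
Qed.

Lemma unit_circle_tangent (g h : R -> R) (x r lg lh : R) :
  0 < r -> (forall z, x - r < z < x + r -> g z ^ 2 + h z ^ 2 = 1) ->
  derivable_pt_lim g x lg -> derivable_pt_lim h x lh ->
  g x * lg + h x * lh = 0.
Proof.
  intros Hr Hnorm Hg Hh.
  assert (Hsq : derivable_pt_lim (fun z => g z ^ 2 + h z ^ 2) x
                  (INR 2 * g x ^ 1 * lg + INR 2 * h x ^ 1 * lh)).
  { apply (derivable_pt_lim_plus (fun z => g z ^ 2) (fun z => h z ^ 2));
      apply (derivable_pt_lim_comp _ (fun z => z ^ 2)); auto; apply derivable_pt_lim_pow. }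
  pose proof (locally_constant_deriv _ x r 1 _ Hr Hnorm Hsq) as H0.
  simpl in H0. lra.
Qed.

Definition partials_exist (f : F3) (t x y : R) : Prop :=
  has_deriv (fun s => f s x y) t /\ has_deriv (fun s => f t s y) x /\
  has_deriv (fun s => f t x s) y.

Lemma partials_mult (f g : F3) (t x y : R) :
  partials_exist f t x y -> partials_exist g t x y ->
  partials_exist (fun t x y => f t x y * g t x y) t x y /\
  dt (fun t x y => f t x y * g t x y) t x y = dt f t x y * g t x y + f t x y * dt g t x y /\
  dx (fun t x y => f t x y * g t x y) t x y = dx f t x y * g t x y + f t x y * dx g t x y /\
  dy (fun t x y => f t x y * g t x y) t x y = dy f t x y * g t x y + f t x y * dy g t x y.
Proof.
  intros [Ft [Fx Fy]] [Gt [Gx Gy]].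
  destruct (deriv_value_mult _ _ t Ft Gt) as [Pt Et].
  destruct (deriv_value_mult _ _ x Fx Gx) as [Px Ex].
  destruct (deriv_value_mult _ _ y Fy Gy) as [Py Ey].
  exact (conj (conj Pt (conj Px Py)) (conj Et (conj Ex Ey))).
Qed.

(* d_t r + div (r (a, b)), expanded by the product rule. *)
Definition mass_residual (r a b : F3) (t x y : R) : R :=
  dt r t x y + (dx r t x y * a t x y + r t x y * dx a t x y)
             + (dy r t x y * b t x y + r t x y * dy b t x y).

(* d_t (r u) + c div (r u (a, b)), expanded by the product rule. *)
Definition momentum_flux (c : R) (r a b u : F3) (t x y : R) : R :=
  (dt r t x y * u t x y + r t x y * dt u t x y)
  + c * (((dx r t x y * u t x y + r t x y * dx u t x y) * a t x y
          + r t x y * u t x y * dx a t x y)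
       + ((dy r t x y * u t x y + r t x y * dy u t x y) * b t x y
          + r t x y * u t x y * dy b t x y)).

Lemma mass_expand (r a b : F3) (t x y : R) :
  partials_exist r t x y -> partials_exist a t x y -> partials_exist b t x y ->
  dt r t x y + dx (fun t x y => r t x y * a t x y) t x y
             + dy (fun t x y => r t x y * b t x y) t x y = mass_residual r a b t x y.
Proof.
  intros Hr Ha Hb.
  destruct (partials_mult r a t x y Hr Ha) as [_ [_ [Ex _]]].
  destruct (partials_mult r b t x y Hr Hb) as [_ [_ [_ Ey]]].
  unfold mass_residual. rewrite Ex, Ey. reflexivity.
Qed.

Lemma momentum_expand (c : R) (r a b u : F3) (t x y : R) :
  partials_exist r t x y -> partials_exist a t x y -> partials_exist b t x y ->
  partials_exist u t x y ->
  dt (fun t x y => r t x y * u t x y) t x y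
  + c * (dx (fun t x y => r t x y * u t x y * a t x y) t x y
         + dy (fun t x y => r t x y * u t x y * b t x y) t x y)
  = momentum_flux c r a b u t x y.
Proof.
  intros Hr Ha Hb Hu.
  destruct (partials_mult r u t x y Hr Hu) as [Hru [Et [Ex Ey]]].
  destruct (partials_mult _ a t x y Hru Ha) as [_ [_ [Eax _]]].
  destruct (partials_mult _ b t x y Hru Hb) as [_ [_ [_ Eby]]].
  unfold momentum_flux. rewrite Et, Eax, Eby, Ex, Ey. reflexivity.
Qed.

Definition material_deriv (c : R) (a b u : F3) (t x y : R) : R :=
  dt u t x y + c * (a t x y * dx u t x y + b t x y * dy u t x y).

Definition momentum_cross (c lambda : R) (r a b : F3) (t x y : R) : R :=
  (momentum_flux c r a b a t x y + lambda * dx r t x y) * b t x y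
  - (momentum_flux c r a b b t x y + lambda * dy r t x y) * a t x y.

(* In the cross combination the mass-flux terms cancel, leaving the
   material derivatives and the pressure gradient. *)
Lemma momentum_cross_identity (c lambda : R) (r a b : F3) (t x y : R) :
  momentum_cross c lambda r a b t x y
  = r t x y * (b t x y * material_deriv c a b a t x y
               - a t x y * material_deriv c a b b t x y)
    + lambda * (b t x y * dx r t x y - a t x y * dy r t x y).
Proof. unfold momentum_cross, momentum_flux, material_deriv. ring. Qed.

Definition Rpos (e : R) : Prop := 0 < e.

Lemma lim_const (a : R) : limit1_in (fun _ => a) Rpos a 0.
Proof. exact (limit_free (fun _ => a) Rpos 0 0). Qed.

Lemma lim_id : limit1_in (fun e => e) Rpos 0 0.
Proof. intros e He. exists e. split; [exact He|]. intros z [_ Hz]. exact Hz. Qed.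

Lemma lim_sq (f : R -> R) (l : R) :
  limit1_in f Rpos l 0 -> limit1_in (fun e => f e ^ 2) Rpos (l ^ 2) 0.
Proof.
  intro Hf. simpl. apply limit_mul; [exact Hf|].
  apply limit_mul; [exact Hf|apply lim_const].
Qed.

Ltac lim := repeat (apply limit_mul || apply limit_minus || apply limit_plus || apply lim_sq);
  first [assumption | apply lim_id | apply lim_const].

Lemma lim_ext (f g : R -> R) (l : R) :
  (forall e, 0 < e -> f e = g e) -> limit1_in f Rpos l 0 -> limit1_in g Rpos l 0.
Proof.
  intros Efg Hf e He. destruct (Hf e He) as [d [Hd Hclose]]. exists d. split; [exact Hd|].
  intros z [Hz Hzd]. rewrite <- Efg by exact Hz. apply Hclose. split; assumption.
Qed.

Lemma lim_unique (f : R -> R) (l l' : R) :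
  limit1_in f Rpos l 0 -> limit1_in f Rpos l' 0 -> l = l'.
Proof.
  apply single_limit. intros a Ha. exists (a / 2). split; [unfold Rpos; lra|].
  unfold Rdist. rewrite Rminus_0_r, Rabs_pos_eq; lra.
Qed.

Lemma stiff_source_vanishes (E S : R -> R) (E0 S0 : R) :
  (forall e, 0 < e -> E e = S e / e) ->
  limit1_in E Rpos E0 0 -> limit1_in S Rpos S0 0 -> S0 = 0.
Proof.
  intros HES HE HS.
  assert (HeE : limit1_in (fun e => e * E e) Rpos (0 * E0) 0) by lim.
  rewrite Rmult_0_l in HeE.
  apply (lim_unique S); [exact HS|].
  apply (lim_ext (fun e => e * E e)); [|exact HeE].
  intros e He. rewrite HES by exact He. field. lra.
Qed.

Lemma parallel_limit (E1 E2 s u1 u2 : R -> R) (E10 E20 u10 u20 : R) :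
  (forall e, 0 < e -> E1 e = s e * u1 e) -> (forall e, 0 < e -> E2 e = s e * u2 e) ->
  limit1_in E1 Rpos E10 0 -> limit1_in E2 Rpos E20 0 ->
  limit1_in u1 Rpos u10 0 -> limit1_in u2 Rpos u20 0 ->
  E10 * u20 - E20 * u10 = 0.
Proof.
  intros HE1 HE2 L1 L2 M1 M2.
  assert (Hcross : limit1_in (fun e => E1 e * u2 e - E2 e * u1 e) Rpos
                     (E10 * u20 - E20 * u10) 0) by lim.
  apply (lim_unique _ _ _ Hcross). apply (lim_ext (fun _ => 0)); [|apply lim_const].
  intros e He. rewrite HE1, HE2 by exact He. ring.
Qed.

Lemma loc_unif_cv_pointwise (U : R -> R -> R -> Prop) (fe : R -> F3) (f0 : F3) (t x y : R) :
  loc_unif_cv U fe f0 -> U t x y ->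
  limit1_in (fun e => fe e t x y) Rpos (f0 t x y) 0.
Proof.
  intros Hcv HU e He. destruct (Hcv t x y HU) as [r [Hr [_ Hunif]]].
  destruct (Hunif e He) as [e0 [He0 Hclose]]. exists e0. split; [exact He0|].
  intros z [Hz Hzd]. unfold Rpos in Hz. simpl in Hzd. unfold Rdist in *.
  rewrite Rminus_0_r, Rabs_pos_eq in Hzd by lra.
  apply Hclose; [lra|]. unfold in_ball. rewrite !Rminus_diag, Rabs_R0. lra.
Qed.

Definition jet_cv (fe : R -> F3) (f0 : F3) (t x y : R) : Prop :=
  limit1_in (fun e => fe e t x y) Rpos (f0 t x y) 0 /\
  limit1_in (fun e => dt (fe e) t x y) Rpos (dt f0 t x y) 0 /\
  limit1_in (fun e => dx (fe e) t x y) Rpos (dx f0 t x y) 0 /\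
  limit1_in (fun e => dy (fe e) t x y) Rpos (dy f0 t x y) 0.

Lemma C1loc_cv_jet (U : R -> R -> R -> Prop) (fe : R -> F3) (f0 : F3) (t x y : R) :
  C1loc_cv U fe f0 -> U t x y -> jet_cv fe f0 t x y.
Proof.
  intros [_ [L [Lt [Lx Ly]]]] HU.
  exact (conj (loc_unif_cv_pointwise U _ _ t x y L HU)
    (conj (loc_unif_cv_pointwise U _ _ t x y Lt HU)
    (conj (loc_unif_cv_pointwise U _ _ t x y Lx HU)
          (loc_unif_cv_pointwise U _ _ t x y Ly HU)))).
Qed.

Lemma mass_residual_limit (re ae be : R -> F3) (r a b : F3) (t x y : R) :
  jet_cv re r t x y -> jet_cv ae a t x y -> jet_cv be b t x y ->
  limit1_in (fun e => mass_residual (re e) (ae e) (be e) t x y) Rpos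
    (mass_residual r a b t x y) 0.
Proof.
  intros [R0 [Rt [Rx Ry]]] [A0 [At [Ax Ay]]] [B0 [Bt [Bx By]]].
  unfold mass_residual. lim.
Qed.

Lemma momentum_flux_limit (c : R) (re ae be ue : R -> F3) (r a b u : F3) (t x y : R) :
  jet_cv re r t x y -> jet_cv ae a t x y -> jet_cv be b t x y -> jet_cv ue u t x y ->
  limit1_in (fun e => momentum_flux c (re e) (ae e) (be e) (ue e) t x y) Rpos
    (momentum_flux c r a b u t x y) 0.
Proof.
  intros [R0 [Rt [Rx Ry]]] [A0 [At [Ax Ay]]] [B0 [Bt [Bx By]]] [U0 [Ut [Ux Uy]]].
  unfold momentum_flux. lim.
Qed.

Section RelaxationLimit.

Variables (c lambda : R) (U : R -> R -> R -> Prop).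
Variables (rho O1 O2 : R -> F3) (rho0 O10 O20 : F3).

Hypothesis Hreg : forall eps, 0 < eps ->
  C1_on U (rho eps) /\ C1_on U (O1 eps) /\ C1_on U (O2 eps).
Hypothesis Hmass : forall eps, 0 < eps -> forall t x y, U t x y ->
  dt (rho eps) t x y
  + dx (fun t x y => rho eps t x y * O1 eps t x y) t x y
  + dy (fun t x y => rho eps t x y * O2 eps t x y) t x y = 0.
Hypothesis Hmom1 : forall eps, 0 < eps -> forall t x y, U t x y ->
  dt (fun t x y => rho eps t x y * O1 eps t x y) t x y
  + c * (dx (fun t x y => rho eps t x y * O1 eps t x y * O1 eps t x y) t x y
         + dy (fun t x y => rho eps t x y * O1 eps t x y * O2 eps t x y) t x y)
  + lambda * dx (rho eps) t x y
  = rho eps t x y / eps * (1 - (O1 eps t x y ^ 2 + O2 eps t x y ^ 2)) * O1 eps t x y.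
Hypothesis Hmom2 : forall eps, 0 < eps -> forall t x y, U t x y ->
  dt (fun t x y => rho eps t x y * O2 eps t x y) t x y
  + c * (dx (fun t x y => rho eps t x y * O2 eps t x y * O1 eps t x y) t x y
         + dy (fun t x y => rho eps t x y * O2 eps t x y * O2 eps t x y) t x y)
  + lambda * dy (rho eps) t x y
  = rho eps t x y / eps * (1 - (O1 eps t x y ^ 2 + O2 eps t x y ^ 2)) * O2 eps t x y.
Hypothesis Hcvr : C1loc_cv U rho rho0.
Hypothesis Hcv1 : C1loc_cv U O1 O10.
Hypothesis Hcv2 : C1loc_cv U O2 O20.

Variables (t x y : R).
Hypothesis HU : U t x y.

Lemma eps_partials (e : R) : 0 < e ->
  partials_exist (rho e) t x y /\ partials_exist (O1 e) t x y /\ partials_exist (O2 e) t x y.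
Proof.
  intro He. destruct (Hreg e He) as [[Pr _] [[P1 _] [P2 _]]].
  exact (conj (Pr t x y HU) (conj (P1 t x y HU) (P2 t x y HU))).
Qed.

Let Jr := C1loc_cv_jet U rho rho0 t x y Hcvr HU.
Let J1 := C1loc_cv_jet U O1 O10 t x y Hcv1 HU.
Let J2 := C1loc_cv_jet U O2 O20 t x y Hcv2 HU.

Lemma limit_mass_residual : mass_residual rho0 O10 O20 t x y = 0.
Proof.
  apply (lim_unique _ _ _ (mass_residual_limit rho O1 O2 rho0 O10 O20 t x y Jr J1 J2)).
  apply (lim_ext (fun _ => 0)); [|apply lim_const].
  intros e He. destruct (eps_partials e He) as [Pr [P1 P2]].
  rewrite <- (mass_expand _ _ _ t x y Pr P1 P2). symmetry. exact (Hmass e He t x y HU).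
Qed.

Let mom1 (e : R) : R :=
  momentum_flux c (rho e) (O1 e) (O2 e) (O1 e) t x y + lambda * dx (rho e) t x y.
Let mom2 (e : R) : R :=
  momentum_flux c (rho e) (O1 e) (O2 e) (O2 e) t x y + lambda * dy (rho e) t x y.

Let relax (e : R) : R := rho e t x y * (1 - (O1 e t x y ^ 2 + O2 e t x y ^ 2)).

Lemma momentum_equations (e : R) : 0 < e ->
  mom1 e = relax e / e * O1 e t x y /\ mom2 e = relax e / e * O2 e t x y.
Proof.
  intro He. destruct (eps_partials e He) as [Pr [P1 P2]]. unfold mom1, mom2, relax.
  rewrite <- (momentum_expand c _ _ _ _ t x y Pr P1 P2 P1),
          <- (momentum_expand c _ _ _ _ t x y Pr P1 P2 P2).
  rewrite Hmom1, Hmom2 by assumption. split; field; lra.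
Qed.

Lemma momentum_limits :
  limit1_in mom1 Rpos (momentum_flux c rho0 O10 O20 O10 t x y + lambda * dx rho0 t x y) 0 /\
  limit1_in mom2 Rpos (momentum_flux c rho0 O10 O20 O20 t x y + lambda * dy rho0 t x y) 0.
Proof.
  pose proof (momentum_flux_limit c rho O1 O2 O1 rho0 O10 O20 O10 t x y Jr J1 J2 J1) as F1.
  pose proof (momentum_flux_limit c rho O1 O2 O2 rho0 O10 O20 O20 t x y Jr J1 J2 J2) as F2.
  destruct Jr as [_ [_ [Rx Ry]]]. unfold mom1, mom2. split.
  - apply limit_plus; [exact F1|apply limit_mul; [apply lim_const|exact Rx]].
  - apply limit_plus; [exact F2|apply limit_mul; [apply lim_const|exact Ry]].
Qed.

Lemma limit_sources_vanish :
  rho0 t x y * (1 - (O10 t x y ^ 2 + O20 t x y ^ 2)) * O10 t x y = 0 /\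
  rho0 t x y * (1 - (O10 t x y ^ 2 + O20 t x y ^ 2)) * O20 t x y = 0.
Proof.
  destruct momentum_limits as [L1 L2].
  destruct Jr as [R0 _]. destruct J1 as [A0 _]. destruct J2 as [B0 _].
  split.
  - eapply (stiff_source_vanishes mom1 (fun e => relax e * O1 e t x y));
      [|exact L1|unfold relax; lim].
    intros e He. rewrite (proj1 (momentum_equations e He)). field. lra.
  - eapply (stiff_source_vanishes mom2 (fun e => relax e * O2 e t x y));
      [|exact L2|unfold relax; lim].
    intros e He. rewrite (proj2 (momentum_equations e He)). field. lra.
Qed.

Lemma limit_momentum_cross : momentum_cross c lambda rho0 O10 O20 t x y = 0.
Proof.
  destruct momentum_limits as [L1 L2]. destruct J1 as [A0 _]. destruct J2 as [B0 _].
  apply (parallel_limit mom1 mom2 (fun e => relax e / e) (fun e => O1 e t x y)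
           (fun e => O2 e t x y));
    auto; intros e He; apply (momentum_equations e He).
Qed.

End RelaxationLimit.

Lemma unit_norm_of_vanishing_sources (q a b : R) :
  0 < q -> ~ (a = 0 /\ b = 0) ->
  q * (1 - (a ^ 2 + b ^ 2)) * a = 0 -> q * (1 - (a ^ 2 + b ^ 2)) * b = 0 ->
  a ^ 2 + b ^ 2 = 1.
Proof.
  intros Hq Hab Ha Hb.
  assert (Hs : q * (1 - (a ^ 2 + b ^ 2)) = 0).
  { destruct (Req_dec a 0) as [Za|Za].
    - apply Rmult_integral in Hb as [Hb|Hb]; [exact Hb|].
      exfalso. exact (Hab (conj Za Hb)).
    - apply Rmult_integral in Ha as [Ha|Ha]; [exact Ha|]. contradiction. }
  apply Rmult_integral in Hs as [Hs|Hs]; lra.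
Qed.

Lemma open3_lines (U : R -> R -> R -> Prop) (t x y : R) :
  open3 U -> U t x y -> exists r, 0 < r /\
    (forall z, t - r < z < t + r -> U z x y) /\
    (forall z, x - r < z < x + r -> U t z y) /\
    (forall z, y - r < z < y + r -> U t x z).
Proof.
  intros HUo HU. destruct (HUo t x y HU) as [r [Hr Hball]].
  assert (Hin : forall s s', s - r < s' < s + r -> Rabs (s' - s) < r)
    by (intros s s' Hs; apply Rabs_def1; lra).
  assert (H0 : Rabs 0 < r) by (rewrite Rabs_R0; exact Hr).
  exists r. split; [exact Hr|].
  repeat split; intros z Hz; apply Hball; unfold in_ball; rewrite ?Rminus_diag; auto.
Qed.

Lemma unit_field_tangent (U : R -> R -> R -> Prop) (a b : F3) (t x y : R) :
  open3 U -> (forall t x y, U t x y -> a t x y ^ 2 + b t x y ^ 2 = 1) -> U t x y ->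
  partials_exist a t x y -> partials_exist b t x y ->
  a t x y * dt a t x y + b t x y * dt b t x y = 0 /\
  a t x y * dx a t x y + b t x y * dx b t x y = 0 /\
  a t x y * dy a t x y + b t x y * dy b t x y = 0.
Proof.
  intros HUo Hnorm HU [At [Ax Ay]] [Bt [Bx By]].
  destruct (open3_lines U t x y HUo HU) as [r [Hr [Lt [Lx Ly]]]].
  split; [|split].
  - apply (unit_circle_tangent (fun s => a s x y) (fun s => b s x y) t r);
      auto using deriv_value_spec.
  - apply (unit_circle_tangent (fun s => a t s y) (fun s => b t s y) x r);
      auto using deriv_value_spec.
  - apply (unit_circle_tangent (fun s => a t x s) (fun s => b t x s) y r);
      auto using deriv_value_spec.
Qed.

Lemma material_deriv_tangent (c : R) (a b : F3) (t x y : R) :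
  a t x y * dt a t x y + b t x y * dt b t x y = 0 ->
  a t x y * dx a t x y + b t x y * dx b t x y = 0 ->
  a t x y * dy a t x y + b t x y * dy b t x y = 0 ->
  a t x y * material_deriv c a b a t x y + b t x y * material_deriv c a b b t x y = 0.
Proof.
  intros Ht Hx Hy. unfold material_deriv.
  replace (a t x y * (dt a t x y + c * (a t x y * dx a t x y + b t x y * dy a t x y))
           + b t x y * (dt b t x y + c * (a t x y * dx b t x y + b t x y * dy b t x y)))
    with ((a t x y * dt a t x y + b t x y * dt b t x y)
          + c * (a t x y * (a t x y * dx a t x y + b t x y * dx b t x y)
                 + b t x y * (a t x y * dy a t x y + b t x y * dy b t x y))) by ring.
  rewrite Ht, Hx, Hy. ring.
Qed.

Lemma vicsek_from_cross (lambda q qx qy a b Da Db : R) :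
  a ^ 2 + b ^ 2 = 1 -> a * Da + b * Db = 0 ->
  q * (b * Da - a * Db) + lambda * (b * qx - a * qy) = 0 ->
  q * Da + lambda * (qx - a * (a * qx + b * qy)) = 0 /\
  q * Db + lambda * (qy - b * (a * qx + b * qy)) = 0.
Proof.
  intros Hn Ht Hx. split.
  - replace (q * Da + lambda * (qx - a * (a * qx + b * qy)))
      with (b * (q * (b * Da - a * Db) + lambda * (b * qx - a * qy))
            + (q * Da + lambda * qx) * (1 - (a ^ 2 + b ^ 2))
            + q * a * (a * Da + b * Db)) by ring.
    rewrite Hx, Hn, Ht. ring.
  - replace (q * Db + lambda * (qy - b * (a * qx + b * qy)))
      with (- a * (q * (b * Da - a * Db) + lambda * (b * qx - a * qy))
            + (q * Db + lambda * qy) * (1 - (a ^ 2 + b ^ 2))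
            + q * b * (a * Da + b * Db)) by ring.
    rewrite Hx, Hn, Ht. ring.
Qed.

Theorem proposition3p1
  (c lambda T : R) (U : R -> R -> R -> Prop)
  (rho O1 O2 : R -> F3) (rho0 O10 O20 : F3)
  (Hc : 0 < c) (Hl : 0 < lambda)
  (HUo : open3 U)
  (HUsub : forall t x y, U t x y -> 0 < t < T)
  (Hreg : forall eps, 0 < eps -> C1_on U (rho eps) /\ C1_on U (O1 eps) /\ C1_on U (O2 eps))
  (Hpos : forall eps, 0 < eps -> forall t x y, U t x y -> 0 < rho eps t x y)
  (Hmass : forall eps, 0 < eps -> forall t x y, U t x y ->
     dt (rho eps) t x y
     + dx (fun t x y => rho eps t x y * O1 eps t x y) t x y
     + dy (fun t x y => rho eps t x y * O2 eps t x y) t x y = 0)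
  (Hmom1 : forall eps, 0 < eps -> forall t x y, U t x y ->
     dt (fun t x y => rho eps t x y * O1 eps t x y) t x y
     + c * (dx (fun t x y => rho eps t x y * O1 eps t x y * O1 eps t x y) t x y
            + dy (fun t x y => rho eps t x y * O1 eps t x y * O2 eps t x y) t x y)
     + lambda * dx (rho eps) t x y
     = rho eps t x y / eps * (1 - (O1 eps t x y ^ 2 + O2 eps t x y ^ 2)) * O1 eps t x y)
  (Hmom2 : forall eps, 0 < eps -> forall t x y, U t x y ->
     dt (fun t x y => rho eps t x y * O2 eps t x y) t x y
     + c * (dx (fun t x y => rho eps t x y * O2 eps t x y * O1 eps t x y) t x y
            + dy (fun t x y => rho eps t x y * O2 eps t x y * O2 eps t x y) t x y)
     + lambda * dy (rho eps) t x y
     = rho eps t x y / eps * (1 - (O1 eps t x y ^ 2 + O2 eps t x y ^ 2)) * O2 eps t x y)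
  (Hcvr : C1loc_cv U rho rho0)
  (Hcv1 : C1loc_cv U O1 O10)
  (Hcv2 : C1loc_cv U O2 O20)
  (Hpos0 : forall t x y, U t x y -> 0 < rho0 t x y)
  (Hnz0 : forall t x y, U t x y -> ~ (O10 t x y = 0 /\ O20 t x y = 0)) :
  forall t x y, U t x y ->
    sqrt (O10 t x y ^ 2 + O20 t x y ^ 2) = 1 /\
    dt rho0 t x y
      + dx (fun t x y => rho0 t x y * O10 t x y) t x y
      + dy (fun t x y => rho0 t x y * O20 t x y) t x y = 0 /\
    rho0 t x y * (dt O10 t x y
                  + c * (O10 t x y * dx O10 t x y + O20 t x y * dy O10 t x y))
      + lambda * (dx rho0 t x y
                  - O10 t x y * (O10 t x y * dx rho0 t x y + O20 t x y * dy rho0 t x y)) = 0 /\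
    rho0 t x y * (dt O20 t x y
                  + c * (O10 t x y * dx O20 t x y + O20 t x y * dy O20 t x y))
      + lambda * (dy rho0 t x y
                  - O20 t x y * (O10 t x y * dx rho0 t x y + O20 t x y * dy rho0 t x y)) = 0.
Proof.
  pose proof (proj1 (proj1 Hcvr)) as Pr0. pose proof (proj1 (proj1 Hcv1)) as P10.
  pose proof (proj1 (proj1 Hcv2)) as P20.
  assert (Hnorm : forall t x y, U t x y -> O10 t x y ^ 2 + O20 t x y ^ 2 = 1).
  { intros t x y HU.
    destruct (limit_sources_vanish _ _ _ _ _ _ _ _ _ Hreg Hmom1 Hmom2 Hcvr Hcv1 Hcv2 t x y HU)
      as [S1 S2].
    exact (unit_norm_of_vanishing_sources _ _ _ (Hpos0 t x y HU) (Hnz0 t x y HU) S1 S2). }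
  intros t x y HU.
  destruct (unit_field_tangent U O10 O20 t x y HUo Hnorm HU (P10 t x y HU) (P20 t x y HU))
    as [Tt [Tx Ty]].
  pose proof (material_deriv_tangent c O10 O20 t x y Tt Tx Ty) as Hmat.
  pose proof (limit_momentum_cross _ _ _ _ _ _ _ _ _ Hreg Hmom1 Hmom2 Hcvr Hcv1 Hcv2 t x y HU)
    as Hcross.
  rewrite momentum_cross_identity in Hcross.
  destruct (vicsek_from_cross lambda _ _ _ _ _ _ _ (Hnorm t x y HU) Hmat Hcross) as [V1 V2].
  split; [|split; [|split; [exact V1|exact V2]]].
  - rewrite (Hnorm t x y HU). exact sqrt_1.
  -
    rewrite (mass_expand _ _ _ t x y (Pr0 t x y HU) (P10 t x y HU) (P20 t x y HU)).
    exact (limit_mass_residual _ _ _ _ _ _ _ Hreg Hmass Hcvr Hcv1 Hcv2 t x y HU).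
Qed.
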